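(* $\nabla\varphi(U)=\mathbb{R}^2\setminus\bigcup_{i=1}^n C_{p_i}$.
   Context: $n\ge3$; $p_1,\dots,p_n\in\mathbb{R}^2_{(u_1,u_2)}$ are distinct vertices, in counterclockwise order, of a convex polygon with interior $U$; indices mod $n$. $A\ge0$, $V(u)=A+\sum_i\frac{1}{2|u-p_i|}$. For $b_1,\dots,b_n\in\mathbb{R}$, $\varphi:\overline U\to\mathbb{R}$ is the unique continuous convex function, smooth in $U$, with $\det D^2\varphi=V$ in $U$, $\varphi(p_i)=b_i$, and $\varphi$ affine linear on each edge $[p_i,p_{i+1}]$. The subgradient set at a vertex is $C_{p_i}=\{y\in\mathbb{R}^2:\varphi(u)-\varphi(p_i)\ge\langle y,u-p_i\rangle\ \forall u\in\overline U\}$. *)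

From Stdlib Require Import Reals Lra Lia List.
From Coquelicot Require Import Coquelicot.
Open Scope R_scope.

Definition pt := (R * R)%type.

Fixpoint sumR (n : nat) (f : nat -> R) : R :=
  match n with O => 0 | S m => sumR m f + f m end.

Definition cross (a b : pt) : R := fst a * snd b - snd a * fst b.
Definition psub (a b : pt) : pt := (fst a - fst b, snd a - snd b).
Definition dot (a b : pt) : R := fst a * fst b + snd a * snd b.
Definition enorm (a : pt) : R := sqrt (fst a ^ 2 + snd a ^ 2).
Definition comb (t : R) (a b : pt) : pt :=
  ((1 - t) * fst a + t * fst b, (1 - t) * snd a + t * snd b).

Definition vert (p : nat -> pt) (n i : nat) : pt := p (Nat.modulo i n).

(* p 0..p(n-1) are distinct vertices, in counterclockwise order, of a convex
   polygon: every other vertex lies strictly to the left of each directed edge. *)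
Definition ccw_convex_polygon (n : nat) (p : nat -> pt) : Prop :=
  (forall i j, (i < n)%nat -> (j < n)%nat -> i <> j -> p i <> p j) /\
  (forall i j, (i < n)%nat -> (j < n)%nat -> j <> i -> j <> Nat.modulo (S i) n ->
     cross (psub (vert p n (S i)) (p i)) (psub (p j) (p i)) > 0).

Definition poly_int (n : nat) (p : nat -> pt) (u : pt) : Prop :=
  forall i, (i < n)%nat -> cross (psub (vert p n (S i)) (p i)) (psub u (p i)) > 0.
Definition poly_cl (n : nat) (p : nat -> pt) (u : pt) : Prop :=
  forall i, (i < n)%nat -> cross (psub (vert p n (S i)) (p i)) (psub u (p i)) >= 0.

(* partial derivatives: true = d/du1, false = d/du2 *)
Definition partial (b : bool) (f : pt -> R) : pt -> R :=
  fun u => if b then Derive (fun t => f (t, snd u)) (fst u)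
           else Derive (fun t => f (fst u, t)) (snd u).

Fixpoint iter_partial (l : list bool) (f : pt -> R) : pt -> R :=
  match l with nil => f | b :: l' => partial b (iter_partial l' f) end.

Definition smooth_on (S : pt -> Prop) (f : pt -> R) : Prop :=
  forall (l : list bool) (u : pt), S u ->
    ex_derive (fun t => iter_partial l f (t, snd u)) (fst u) /\
    ex_derive (fun t => iter_partial l f (fst u, t)) (snd u) /\
    continuous (iter_partial l f) u.

Definition grad (f : pt -> R) (u : pt) : pt := (partial true f u, partial false f u).

Definition hess_det (f : pt -> R) (u : pt) : R :=
  partial true (partial true f) u * partial false (partial false f) u
  - partial true (partial false f) u * partial false (partial true f) u.

Definition Vpot (A : R) (n : nat) (p : nat -> pt) (u : pt) : R :=
  A + sumR n (fun i => 1 / (2 * enorm (psub u (p i)))).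

Definition convex_on (S : pt -> Prop) (f : pt -> R) : Prop :=
  forall x y t, S x -> S y -> 0 <= t <= 1 ->
    f (comb t x y) <= (1 - t) * f x + t * f y.

Definition cont_within_on (S : pt -> Prop) (f : pt -> R) : Prop :=
  forall u, S u -> filterlim f (within S (locally u)) (locally (f u)).

Definition affine_on_segment (f : pt -> R) (a b : pt) : Prop :=
  exists (c : pt) (d : R), forall t, 0 <= t <= 1 ->
    f (comb t a b) = dot c (comb t a b) + d.

Definition subgrad (S : pt -> Prop) (f : pt -> R) (q : pt) (y : pt) : Prop :=
  forall u, S u -> f u - f q >= dot y (psub u q).

From Stdlib Require Import Reals Lra Lia List Classical ClassicalEpsilon.
From Coquelicot Require Import Coquelicot.
Open Scope R_scope.

(* Both directions study the tilted function [phi - <y, .>], convex on the closed polygon.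
   If [y = grad phi u] at an interior point [u], then [u] minimizes it; if moreover [y] is a
   subgradient at a vertex [q], i.e. [q] minimizes it too, then by convexity so does every point of
   the segment [u, q].  Hence [grad phi = y] along that segment, the Hessian annihilates its
   direction, and [det D^2 phi] vanishes there, contradicting [det D^2 phi = V > 0].
   Conversely, the tilted function attains its minimum on the compact polygon.  An interior
   minimizer has gradient [y]; a minimizer on an edge, where the tilted function is affine, forces
   an endpoint of that edge to be a minimizer as well, i.e. [y] is a subgradient at a vertex. *)

(** * Cyclic indices *)

(* [vert p n (S i)] and [p (nxt n i)] are convertible. *)
Definition nxt (n i : nat) : nat := Nat.modulo (S i) n.
Definition prv (n k : nat) : nat := Nat.modulo (k + n - 1) n.

Lemma nxt_cases n i : (i < n)%nat ->
  ((S i < n)%nat /\ nxt n i = S i) \/ (S i = n /\ nxt n i = 0%nat).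
Proof.
  intros Hi. unfold nxt. destruct (Nat.eq_dec (S i) n) as [E|E].
  - right. split; auto. symmetry. apply (Nat.mod_unique _ _ 1); lia.
  - left. split; [lia|]. apply Nat.mod_small; lia.
Qed.

Lemma prv_cases n k : (k < n)%nat ->
  (k = 0%nat /\ prv n k = (n - 1)%nat) \/ ((0 < k)%nat /\ prv n k = (k - 1)%nat).
Proof.
  intros Hk. unfold prv. destruct k as [|k].
  - left. split; auto. apply Nat.mod_small; lia.
  - right. split; [lia|]. symmetry. apply (Nat.mod_unique _ _ 1); lia.
Qed.

Lemma nxt_lt n i : (i < n)%nat -> (nxt n i < n)%nat.
Proof. intros H; destruct (nxt_cases n i H) as [[? ->]|[? ->]]; lia. Qed.

Lemma prv_lt n k : (k < n)%nat -> (prv n k < n)%nat.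
Proof. intros H; destruct (prv_cases n k H) as [[? ->]|[? ->]]; lia. Qed.

Lemma nxt_prv n k : (k < n)%nat -> nxt n (prv n k) = k.
Proof.
  intros H. pose proof (prv_lt n k H) as H'.
  destruct (prv_cases n k H) as [[? E]|[? E]]; rewrite E in *;
    destruct (nxt_cases n _ H') as [[? ->]|[? ->]]; lia.
Qed.

Lemma prv_neq n k : (2 <= n)%nat -> (k < n)%nat -> prv n k <> k.
Proof. intros Hn H; destruct (prv_cases n k H) as [[? ->]|[? ->]]; lia. Qed.

Lemma prv_neq_nxt n k : (3 <= n)%nat -> (k < n)%nat -> prv n k <> nxt n k.
Proof.
  intros Hn H; destruct (prv_cases n k H) as [[? ->]|[? ->]];
    destruct (nxt_cases n k H) as [[? ->]|[? ->]]; lia.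
Qed.

Lemma nxt_neq n i : (2 <= n)%nat -> (i < n)%nat -> nxt n i <> i.
Proof. intros Hn H; destruct (nxt_cases n i H) as [[? ->]|[? ->]]; lia. Qed.

Lemma nxt_nxt_neq n i : (3 <= n)%nat -> (i < n)%nat -> nxt n (nxt n i) <> i.
Proof.
  intros Hn H. pose proof (nxt_lt n i H) as H'.
  destruct (nxt_cases n i H) as [[? E]|[? E]]; rewrite E in *;
    destruct (nxt_cases n _ H') as [[? ->]|[? ->]]; lia.
Qed.

(** * Plane geometry and compactness *)

Lemma list_argmin {A : Type} (f : A -> R) (l : list A) : l <> nil ->
  exists x, In x l /\ forall z, In z l -> f x <= f z.
Proof.
  induction l as [|a l IH]; intros Hl; [congruence|].
  destruct l as [|b l'].
  - exists a. split; [left; reflexivity|]. intros z [<-|[]]. lra.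
  - destruct IH as [x [Hx Hmin]]; [discriminate|].
    destruct (Rle_dec (f a) (f x)) as [L|L].
    + exists a. split; [left; reflexivity|].
      intros z [<-|Hz]; [lra| specialize (Hmin z Hz); lra].
    + exists x. split; [right; exact Hx|].
      intros z [<-|Hz]; [lra| auto].
Qed.

Lemma comb_0 (a b : pt) : comb 0 a b = a.
Proof. destruct a; unfold comb; simpl; f_equal; ring. Qed.

Lemma comb_1 (a b : pt) : comb 1 a b = b.
Proof. destruct b; unfold comb; simpl; f_equal; ring. Qed.

Lemma dot_comb (y a b : pt) (s : R) :
  dot y (comb s a b) = (1 - s) * dot y a + s * dot y b.
Proof. unfold dot, comb; simpl; ring. Qed.

Lemma cross_psub_comb (e q a b : pt) (s : R) :
  cross e (psub (comb s a b) q) = (1 - s) * cross e (psub a q) + s * cross e (psub b q).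
Proof. unfold cross, psub, comb; simpl; ring. Qed.

Definition lin2 (al : R) (a : pt) (be : R) (b : pt) : pt :=
  (al * fst a + be * fst b, al * snd a + be * snd b).

(* Cramer's rule. *)
Lemma cross_decomp (a b w : pt) : cross a b <> 0 ->
  w = lin2 (cross w b / cross a b) a (cross a w / cross a b) b.
Proof.
  intros H. destruct w as [w1 w2]. unfold lin2, cross in *; simpl in *. f_equal; field; exact H.
Qed.

Lemma dot_lin2 (c a b : pt) (al be : R) :
  dot c (lin2 al a be b) = al * dot c a + be * dot c b.
Proof. unfold dot, lin2; simpl; ring. Qed.

Lemma cross_lin2 (e a b : pt) (al be : R) :
  cross e (lin2 al a be b) = al * cross e a + be * cross e b.
Proof. unfold cross, lin2; simpl; ring. Qed.

Lemma cross_eq_0_of_dot_eq_0 (a b d : pt) : d <> (0, 0) -> dot a d = 0 -> dot b d = 0 ->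
  cross a b = 0.
Proof.
  intros Hd Ha Hb.
  assert (E1 : cross a b * fst d = snd b * dot a d - snd a * dot b d)
    by (unfold cross, dot; ring).
  assert (E2 : cross a b * snd d = fst a * dot b d - fst b * dot a d)
    by (unfold cross, dot; ring).
  rewrite Ha, Hb, !Rmult_0_r, Rminus_0_r in E1, E2.
  destruct (Rmult_integral _ _ E1) as [|H1]; [assumption|].
  destruct (Rmult_integral _ _ E2) as [|H2]; [assumption|].
  destruct d; simpl in *; subst; congruence.
Qed.

Lemma continuous_affine (a b c : R) (u : pt) :
  continuous (fun v : pt => a * fst v + b * snd v + c) u.
Proof.
  destruct u as [u1 u2].
  apply (continuous_plus (fun v : pt => a * fst v + b * snd v) (fun _ => c));
    [|apply continuous_const].
  apply (continuous_plus (fun v : pt => a * fst v) (fun v : pt => b * snd v)).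
  - apply (continuous_mult (fun _ => a) fst); [apply continuous_const| apply continuous_fst].
  - apply (continuous_mult (fun _ => b) snd); [apply continuous_const| apply continuous_snd].
Qed.

Lemma open_forall_lt {T : UniformSpace} (m : nat) (P : nat -> T -> Prop) :
  (forall i, open (P i)) -> open (fun u => forall i, (i < m)%nat -> P i u).
Proof.
  intros HP. induction m as [|m IH].
  - apply (open_ext (fun _ => True)); [|apply open_true].
    intros u; split; [intros _ i Hi; lia| auto].
  - apply (open_ext (fun u => (forall i, (i < m)%nat -> P i u) /\ P m u));
      [|apply open_and; auto].
    intros u; split.
    + intros [H1 H2] i Hi. destruct (Nat.eq_dec i m) as [->|E]; [exact H2| apply H1; lia].
    + intros H. split; [intros i Hi|]; apply H; lia.
Qed.

Lemma closed_forall_lt {T : UniformSpace} (m : nat) (P : nat -> T -> Prop) :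
  (forall i, closed (P i)) -> closed (fun u => forall i, (i < m)%nat -> P i u).
Proof.
  intros HP. induction m as [|m IH].
  - apply (closed_ext (fun _ => True)); [|apply closed_true].
    intros u; split; [intros _ i Hi; lia| auto].
  - apply (closed_ext (fun u => (forall i, (i < m)%nat -> P i u) /\ P m u));
      [|apply closed_and; auto].
    intros u; split.
    + intros [H1 H2] i Hi. destruct (Nat.eq_dec i m) as [->|E]; [exact H2| apply H1; lia].
    + intros H. split; [intros i Hi|]; apply H; lia.
Qed.

Lemma closed_bounded_finite_cover (K : pt -> Prop) (a b c d : R) (delta : pt -> posreal) :
  closed K -> (forall w, K w -> a <= fst w <= b /\ c <= snd w <= d) ->
  exists l, forall w, K w -> exists t, In t l /\ K t /\ ball t (delta t) w.
Proof.
  intros HK Hbox.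
  (* Outside [K] the gauge shrinks to balls missing [K], so every useful centre lies in [K]. *)
  assert (Hgauge : exists delta' : pt -> posreal, forall t,
    delta' t <= delta t /\ (~ K t -> forall w, ball t (delta' t) w -> ~ K w)).
  { apply (choice (fun t (e : posreal) =>
      e <= delta t /\ (~ K t -> forall w, ball t e w -> ~ K w))).
    intros t. destruct (classic (K t)) as [Kt|Kt].
    - exists (delta t). split; [lra| contradiction].
    - assert (Hloc : locally t (fun w => ~ K w)) by (apply NNPP; intros H; exact (Kt (HK t H))).
      destruct Hloc as [e He].
      exists (mkposreal _ (Rmin_stable_in_posreal e (delta t))). split; [apply Rmin_r|].
      intros _ w Hw. apply He. apply (ball_le t (Rmin e (delta t))); [apply Rmin_l| exact Hw]. }
  destruct Hgauge as [delta' Hdelta'].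
  set (tr := fun t : R * (R * unit) => (fst t, fst (snd t)) : pt).
  apply NNPP; intros Hno.
  apply (compactness_list 2 (a, (c, tt)) (b, (d, tt)) (fun t => delta' (tr t))).
  intros [l Hl]. apply Hno. exists (map tr l).
  intros [w1 w2] Kw. destruct (Hbox _ Kw) as [B1 B2].
  destruct (Hl (w1, (w2, tt))) as [[t1 [t2 []]] [Ht [_ [C1 [C2 _]]]]]; [simpl; tauto|].
  assert (Hball : ball (t1, t2) (delta' (t1, t2)) (w1, w2)) by (split; assumption).
  exists (t1, t2). split; [exact (in_map tr _ _ Ht)|]. split.
  - apply NNPP; intros Kt. exact (proj2 (Hdelta' _) Kt _ Hball Kw).
  - apply (ball_le _ (delta' (t1, t2))); [apply Hdelta'| exact Hball].
Qed.

(* Were there no minimum, every [t] in [K] would have a witness [s] with [G s < G] near [t]; among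
   finitely many neighbourhoods covering [K], the witness of least value is beaten by another. *)
Lemma closed_bounded_attains_min (K : pt -> Prop) (G : pt -> R) (a b c d : R) :
  closed K -> (forall w, K w -> a <= fst w <= b /\ c <= snd w <= d) -> (exists w, K w) ->
  cont_within_on K G -> exists v, K v /\ forall w, K w -> G v <= G w.
Proof.
  intros HK Hbox [w0 Kw0] HG. apply NNPP; intros Hno.
  assert (Hwit : forall t, exists se : pt * posreal, K (fst se) /\
    (K t -> forall w, K w -> ball t (snd se) w -> G (fst se) < G w)).
  { intros t. destruct (classic (K t)) as [Kt|Kt].
    - assert (Hs : exists s, K s /\ G s < G t).
      { apply NNPP; intros H. apply Hno. exists t. split; [exact Kt|]. intros w Kw.
        apply Rnot_lt_le; intros Hlt. apply H. exists w. auto. }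
      destruct Hs as [s [Ks Hst]].
      assert (Hloc : locally (G t) (ball (G t) (mkposreal _ (proj2 (Rlt_0_minus _ _) Hst))))
        by apply locally_ball.
      destruct (HG t Kt _ Hloc) as [e He].
      exists (s, e). split; [exact Ks|]. intros _ w Kw Hw.
      specialize (He w Hw Kw). change (Rabs (G w - G t) < G t - G s) in He.
      apply Rabs_def2 in He. simpl. lra.
    - exists (w0, mkposreal 1 Rlt_0_1). split; [exact Kw0| contradiction]. }
  destruct (choice _ Hwit) as [f Hf].
  destruct (closed_bounded_finite_cover K a b c d (fun t => snd (f t)) HK Hbox) as [l Hl].
  destruct (list_argmin (fun t => G (fst (f t))) l) as [t0 [Ht0 Hmin]].
  { destruct (Hl w0 Kw0) as [t [Ht _]]. destruct l; [destruct Ht| discriminate]. }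
  destruct (Hl (fst (f t0)) (proj1 (Hf t0))) as [t [Ht [Kt Hball]]].
  pose proof (proj2 (Hf t) Kt _ (proj1 (Hf t0)) Hball).
  pose proof (Hmin t Ht). lra.
Qed.

(** * The convex polygon *)

Definition side (n : nat) (p : nat -> pt) (i : nat) (u : pt) : R :=
  cross (psub (vert p n (S i)) (p i)) (psub u (p i)).

Section Polygon.

Variables (n : nat) (p : nat -> pt).
Hypothesis Hn : (3 <= n)%nat.
Hypothesis Hp : ccw_convex_polygon n p.

Lemma side_continuous i u : continuous (side n p i) u.
Proof.
  set (E := psub (vert p n (S i)) (p i)).
  apply (continuous_ext
    (fun v => - snd E * fst v + fst E * snd v + (snd E * fst (p i) - fst E * snd (p i)))).
  - intros v. unfold side, cross, psub; fold E; simpl. ring.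
  - apply continuous_affine.
Qed.

Lemma poly_int_open : open (poly_int n p).
Proof.
  apply (open_forall_lt n (fun i u => 0 < side n p i u)). intros i.
  apply (open_comp (side n p i) (fun r => 0 < r)); [intros; apply side_continuous| apply open_gt].
Qed.

Lemma poly_cl_closed : closed (poly_cl n p).
Proof.
  apply (closed_ext (fun u => forall i, (i < n)%nat -> 0 <= side n p i u)).
  { intros u; split; intros H i Hi; specialize (H i Hi); unfold side in *; lra. }
  apply (closed_forall_lt n (fun i u => 0 <= side n p i u)). intros i.
  apply (closed_comp (side n p i) (fun r => 0 <= r));
    [intros; apply side_continuous| apply closed_ge].
Qed.

Lemma poly_cl_of_int u : poly_int n p u -> poly_cl n p u.
Proof. intros H i Hi. left. apply H; auto. Qed.

Lemma poly_int_neq_vert u i : poly_int n p u -> (i < n)%nat -> u <> p i.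
Proof. intros Hu Hi ->. specialize (Hu i Hi). unfold cross, psub in Hu; simpl in Hu. lra. Qed.

Lemma side_vert_pos i j : (i < n)%nat -> (j < n)%nat -> j <> i -> j <> nxt n i ->
  side n p i (p j) > 0.
Proof. intros; apply (proj2 Hp); auto. Qed.

Lemma poly_cl_vert i : (i < n)%nat -> poly_cl n p (p i).
Proof.
  intros Hi j Hj.
  destruct (Nat.eq_dec i j) as [<-|E].
  - right. unfold cross, psub; simpl; ring.
  - destruct (Nat.eq_dec i (nxt n j)) as [E2|E2].
    + right. unfold vert. fold (nxt n j). rewrite <- E2. unfold cross, psub; simpl; ring.
    + apply Rgt_ge, side_vert_pos; auto.
Qed.

Lemma poly_int_comb x y s : poly_int n p x -> poly_cl n p y -> 0 <= s < 1 ->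
  poly_int n p (comb s x y).
Proof.
  intros Hx Hy Hs j Hj. rewrite cross_psub_comb.
  specialize (Hx j Hj). specialize (Hy j Hj).
  assert (0 < (1 - s) * cross (psub (vert p n (S j)) (p j)) (psub x (p j)))
    by (apply Rmult_lt_0_compat; lra).
  assert (0 <= s * cross (psub (vert p n (S j)) (p j)) (psub y (p j)))
    by (apply Rmult_le_pos; lra).
  lra.
Qed.

Lemma poly_cl_cone k u : (k < n)%nat -> poly_cl n p u ->
  exists al be, 0 <= al /\ 0 <= be /\
    psub u (p k) = lin2 al (psub (p (nxt n k)) (p k)) be (psub (p (prv n k)) (p k)).
Proof.
  intros Hk Hu.
  set (a := psub (p (nxt n k)) (p k)). set (b := psub (p (prv n k)) (p k)).
  set (w := psub u (p k)).
  assert (HC : cross a b > 0).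
  { apply side_vert_pos; auto using prv_lt, prv_neq_nxt. apply prv_neq; auto; lia. }
  assert (Ha : cross a w >= 0) by exact (Hu k Hk).
  assert (Hb : cross w b >= 0).
  { pose proof (Hu (prv n k) (prv_lt n k Hk)) as H. unfold vert in H. fold (nxt n (prv n k)) in H.
    rewrite nxt_prv in H by exact Hk.
    replace (cross w b) with (cross (psub (p k) (p (prv n k))) (psub u (p (prv n k))))
      by (unfold w, b, cross, psub; simpl; ring).
    exact H. }
  exists (cross w b / cross a b), (cross a w / cross a b).
  split; [|split]; [apply Rdiv_le_0_compat; lra.. |].
  apply cross_decomp. lra.
Qed.

Lemma poly_cl_dot_le_vert (c : pt) : exists k, (k < n)%nat /\
  forall u, poly_cl n p u -> dot c u <= dot c (p k).
Proof.
  destruct (list_argmin (fun j => - dot c (p j)) (seq 0 n)) as [k [Hk Hmax]].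
  { destruct n; [lia| discriminate]. }
  apply in_seq in Hk. exists k. split; [lia|]. intros u Hu.
  assert (Hv : forall j, (j < n)%nat -> dot c (psub (p j) (p k)) <= 0).
  { intros j Hj. assert (Hjs : In j (seq 0 n)) by (apply in_seq; lia).
    specialize (Hmax j Hjs).
    unfold dot, psub in *; simpl in *; lra. }
  destruct (poly_cl_cone k u ltac:(lia) Hu) as [al [be [Hal [Hbe E]]]].
  assert (H : dot c (psub u (p k)) <= 0).
  { rewrite E, dot_lin2.
    pose proof (Hv _ (nxt_lt n k ltac:(lia))); pose proof (Hv _ (prv_lt n k ltac:(lia))).
    assert (al * dot c (psub (p (nxt n k)) (p k)) <= 0) by (apply Rmult_le_0_l; lra).
    assert (be * dot c (psub (p (prv n k)) (p k)) <= 0) by (apply Rmult_le_0_l; lra).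
    lra. }
  unfold dot, psub in *; simpl in *; lra.
Qed.

Lemma poly_cl_bounded : exists a b c d, forall u, poly_cl n p u ->
  a <= fst u <= b /\ c <= snd u <= d.
Proof.
  destruct (poly_cl_dot_le_vert (1, 0)) as [k1 [_ H1]].
  destruct (poly_cl_dot_le_vert (-1, 0)) as [k2 [_ H2]].
  destruct (poly_cl_dot_le_vert (0, 1)) as [k3 [_ H3]].
  destruct (poly_cl_dot_le_vert (0, -1)) as [k4 [_ H4]].
  exists (- dot (-1, 0) (p k2)), (dot (1, 0) (p k1)), (- dot (0, -1) (p k4)), (dot (0, 1) (p k3)).
  intros u Hu.
  specialize (H1 u Hu); specialize (H2 u Hu); specialize (H3 u Hu); specialize (H4 u Hu).
  unfold dot in *; simpl in *. split; split; lra.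
Qed.

Lemma poly_cl_boundary_on_edge i v : (i < n)%nat -> poly_cl n p v -> ~ side n p i v > 0 ->
  exists t, 0 <= t <= 1 /\ v = comb t (p i) (p (nxt n i)).
Proof.
  intros Hi Hv Hx.
  destruct (poly_cl_cone i v Hi Hv) as [al [be [Hal [Hbe E]]]].
  set (a := psub (p (nxt n i)) (p i)) in E. set (b := psub (p (prv n i)) (p i)) in E.
  assert (HC : cross a b > 0).
  { apply side_vert_pos; auto using prv_lt, prv_neq_nxt. apply prv_neq; auto; lia. }
  assert (Hbe0 : be = 0).
  { assert (Hs : side n p i v = be * cross a b).
    { unfold side, vert. fold (nxt n i). fold a. rewrite E, cross_lin2.
      unfold cross at 1; simpl. ring. }
    pose proof (Hv i Hi). fold (side n p i v) in *. nra. }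
  subst be.
  assert (Hj : (nxt n i < n)%nat) by (apply nxt_lt; exact Hi).
  assert (Hq : side n p (nxt n i) (p i) > 0).
  { apply side_vert_pos; auto.
    - apply not_eq_sym, nxt_neq; auto; lia.
    - apply not_eq_sym, nxt_nxt_neq; auto. }
  pose proof (Hv (nxt n i) Hj) as Hge. fold (side n p (nxt n i) v) in Hge.
  unfold side, vert in Hq, Hge. fold (nxt n (nxt n i)) in Hq, Hge.
  destruct v as [v1 v2]. unfold lin2, a, b, psub in E; simpl in E. injection E as E1 E2.
  exists al. split; [split; [exact Hal|]|].
  - unfold cross, psub in Hq, Hge; simpl in Hq, Hge. nra.
  - unfold comb; simpl. f_equal; lra.
Qed.

End Polygon.

(** * Calculus in two variables *)

Definition along (z d : pt) (t : R) : pt := (fst z + t * fst d, snd z + t * snd d).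

Lemma comb_along (t : R) (u q : pt) : comb t u q = along u (psub q u) t.
Proof. unfold comb, along, psub; simpl; f_equal; ring. Qed.

Lemma along_comb (s t : R) (u q : pt) : along (comb s u q) (psub q u) t = comb (s + t) u q.
Proof. unfold along, comb, psub; simpl; f_equal; ring. Qed.

Lemma iter_partial_app (l : list bool) (b : bool) (f : pt -> R) :
  iter_partial l (partial b f) = iter_partial (l ++ b :: nil) f.
Proof. induction l as [|b' l IH]; simpl; [reflexivity| now rewrite IH]. Qed.

Lemma smooth_on_partial (S : pt -> Prop) (f : pt -> R) (b : bool) :
  smooth_on S f -> smooth_on S (partial b f).
Proof. intros Hs l u Su. rewrite iter_partial_app. exact (Hs _ u Su). Qed.

Lemma is_derive_along (S : pt -> Prop) (F : pt -> R) (z d : pt) :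
  open S -> smooth_on S F -> S z ->
  is_derive (fun t => F (along z d t)) 0 (dot (grad F z) d).
Proof.
  intros HS Hs Sz. destruct z as [x y].
  assert (Hx : locally (x, y) (fun u : pt =>
    is_derive (fun t => F (t, snd u)) (fst u) (partial true F (fst u, snd u)))).
  { apply (locally_open S); [exact HS| |exact Sz].
    intros u Su. apply Derive_correct. exact (proj1 (Hs nil u Su)). }
  assert (Hy : is_derive (fun t => F (x, t)) y (partial false F (x, y))).
  { apply Derive_correct. exact (proj1 (proj2 (Hs nil (x, y) Sz))). }
  assert (Hc : continuous (fun u : pt => partial true F (fst u, snd u)) (x, y)).
  { apply (continuous_ext (partial true F)); [intros [u1 u2]; reflexivity|].
    exact (proj2 (proj2 (Hs (true :: nil) (x, y) Sz))). }
  pose proof (is_derive_filterdiff (fun a b => F (a, b)) x y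
    (fun a b => partial true F (a, b)) _ Hx Hy Hc) as Hdiff.
  apply filterdiff_differentiable_pt_lim in Hdiff.
  apply is_derive_Reals.
  apply (derivable_pt_lim_comp_2d (fun a b => F (a, b))
           (fun t => x + t * fst d) (fun t => y + t * snd d)).
  - simpl. rewrite !Rmult_0_l, !Rplus_0_r. exact Hdiff.
  - apply is_derive_Reals. auto_derive; [exact I| ring].
  - apply is_derive_Reals. auto_derive; [exact I| ring].
Qed.

Lemma Derive_eq_of_local_min (f : R -> R) (x c : R) : ex_derive f x ->
  locally x (fun t => f x - c * x <= f t - c * t) -> Derive f x = c.
Proof.
  intros Hd [e He].
  assert (Hl : derivable_pt_lim (fun t => f t - c * t) x (Derive f x - c)).
  { apply is_derive_Reals. auto_derive; [exact Hd|]. change (fun t => f t) with f. ring. }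
  pose (pr := exist (fun l => derivable_pt_lim (fun t => f t - c * t) x l) _ Hl).
  assert (H0 : derive_pt (fun t => f t - c * t) x pr = 0).
  { pose proof (cond_pos e).
    apply (deriv_minimum _ (x - e) (x + e)); [lra| lra|].
    intros t H1 H2. apply He. change (Rabs (t - x) < e). apply Rabs_def1; lra. }
  simpl in H0. lra.
Qed.

Lemma is_derive_le_chord (h : R -> R) (l : R) : is_derive h 0 l ->
  (forall t, 0 <= t <= 1 -> h t <= (1 - t) * h 0 + t * h 1) -> l <= h 1 - h 0.
Proof.
  intros Hd Hc. apply is_derive_Reals in Hd. apply Rnot_lt_le; intros Hlt.
  destruct (Hd (l - (h 1 - h 0))) as [del Hdel]; [lra|].
  pose proof (cond_pos del) as Hdp.
  set (t := Rmin (del / 2) (1 / 2)).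
  assert (Ht : 0 < t <= 1 / 2) by (split; [apply Rmin_glb_lt; lra| apply Rmin_r]).
  assert (Htd : t < del) by (pose proof (Rmin_l (del / 2) (1 / 2)); unfold t in *; lra).
  specialize (Hdel t ltac:(lra) ltac:(rewrite Rabs_pos_eq; lra)).
  rewrite Rplus_0_l in Hdel. specialize (Hc t ltac:(lra)).
  set (q := (h t - h 0) / t) in *.
  assert (Hq : q <= h 1 - h 0).
  { apply (Rmult_le_reg_r t); [lra|]. unfold q. field_simplify; lra. }
  apply Rabs_def2 in Hdel. lra.
Qed.

Lemma hess_det_cross (f : pt -> R) (u : pt) :
  hess_det f u = cross (grad (partial true f) u) (grad (partial false f) u).
Proof. unfold hess_det, cross, grad; simpl; ring. Qed.

Lemma hess_det_eq_0_of_grad_const (S : pt -> Prop) (phi : pt -> R) (w d y : pt) :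
  open S -> smooth_on S phi -> S w -> d <> (0, 0) ->
  locally 0 (fun t => grad phi (along w d t) = y) -> hess_det phi w = 0.
Proof.
  intros HS Hs Sw Hd Hy. rewrite hess_det_cross.
  assert (H0 : forall b, dot (grad (partial b phi) w) d = 0).
  { intros b.
    pose proof (is_derive_along S (partial b phi) w d HS (smooth_on_partial S phi b Hs) Sw) as Hdot.
    assert (Hconst : is_derive (fun t => partial b phi (along w d t)) 0 0).
    { apply (is_derive_ext_loc (fun _ => if b then fst y else snd y));
        [|exact (is_derive_const (if b then fst y else snd y) 0)].
      apply (filter_imp (fun t => grad phi (along w d t) = y)); [|exact Hy].
      intros t <-. now destruct b. }
    rewrite <- (is_derive_unique _ _ _ Hdot). exact (is_derive_unique _ _ _ Hconst). }
  apply (cross_eq_0_of_dot_eq_0 _ _ d); auto.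
Qed.

(** * Tilted functions *)

Definition tilt (phi : pt -> R) (y v : pt) : R := phi v - dot y v.

Lemma subgrad_iff_tilt_min (K : pt -> Prop) (phi : pt -> R) (q y : pt) :
  subgrad K phi q y <-> forall w, K w -> tilt phi y q <= tilt phi y w.
Proof.
  split; intros H w Kw; specialize (H w Kw); unfold tilt, dot, psub in *; simpl in *; lra.
Qed.

Lemma convex_on_tilt (K : pt -> Prop) (phi : pt -> R) (y : pt) :
  convex_on K phi -> convex_on K (tilt phi y).
Proof.
  intros Hc a b s Ka Kb Hs. unfold tilt. rewrite dot_comb.
  pose proof (Hc a b s Ka Kb Hs). lra.
Qed.

Lemma cont_within_on_tilt (K : pt -> Prop) (phi : pt -> R) (y : pt) :
  cont_within_on K phi -> cont_within_on K (tilt phi y).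
Proof.
  intros Hc u Ku.
  assert (Hdot : filterlim (fun v => opp (dot y v)) (within K (locally u))
                           (locally (opp (dot y u)))).
  { apply (filterlim_filter_le_1 (F := locally u)); [apply filter_le_within|].
    apply (continuous_opp (dot y)).
    apply (continuous_ext (fun v => fst y * fst v + snd y * snd v + 0));
      [intros v; unfold dot; simpl; ring| apply continuous_affine]. }
  exact (filterlim_comp_2 phi (fun v => opp (dot y v)) plus (Hc u Ku) Hdot (filterlim_plus _ _)).
Qed.

Lemma affine_on_segment_tilt (phi : pt -> R) (a b y : pt) (t : R) :
  affine_on_segment phi a b -> 0 <= t <= 1 ->
  tilt phi y (comb t a b) = (1 - t) * tilt phi y a + t * tilt phi y b.
Proof.
  intros [c [d0 Haff]] Ht.
  pose proof (Haff 0 ltac:(lra)) as H0. pose proof (Haff 1 ltac:(lra)) as H1.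
  rewrite comb_0 in H0. rewrite comb_1 in H1.
  unfold tilt. rewrite (Haff t Ht), H0, H1, !dot_comb. ring.
Qed.

Lemma convex_comb_le_endpoint (a b m t : R) : 0 <= t <= 1 ->
  (1 - t) * a + t * b <= m -> a <= m \/ b <= m.
Proof.
  intros Ht H. destruct (Rle_dec a m) as [L|L]; [left; exact L| right].
  assert (Hpos : 0 <= (1 - t) * (a - m)) by (apply Rmult_le_pos; lra).
  destruct (Req_dec t 0) as [->|Ht0]; [lra|].
  apply (Rmult_le_reg_l t); lra.
Qed.

Lemma grad_eq_of_min_on_open (S : pt -> Prop) (phi : pt -> R) (y v : pt) :
  open S -> smooth_on S phi -> S v ->
  (forall w, S w -> tilt phi y v <= tilt phi y w) -> grad phi v = y.
Proof.
  intros HS Hs Sv Hmin.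
  destruct (HS v Sv) as [e He]. destruct (Hs nil v Sv) as [Dx [Dy _]].
  destruct v as [v1 v2]; destruct y as [y1 y2]. unfold grad, partial; simpl in *. f_equal.
  - apply Derive_eq_of_local_min; [exact Dx|]. exists e. intros t Ht.
    specialize (Hmin (t, v2) (He (t, v2) (conj Ht (ball_center v2 e)))).
    unfold tilt, dot in Hmin; simpl in Hmin. lra.
  - apply Derive_eq_of_local_min; [exact Dy|]. exists e. intros t Ht.
    specialize (Hmin (v1, t) (He (v1, t) (conj (ball_center v1 e) Ht))).
    unfold tilt, dot in Hmin; simpl in Hmin. lra.
Qed.

Lemma tilt_min_of_grad (S K : pt -> Prop) (phi : pt -> R) (u : pt) :
  open S -> (forall v, S v -> K v) -> smooth_on S phi -> convex_on K phi -> S u ->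
  forall w, K w -> tilt phi (grad phi u) u <= tilt phi (grad phi u) w.
Proof.
  intros HS HSK Hs Hconv Su w Kw.
  assert (Hd : is_derive (fun t => phi (comb t u w)) 0 (dot (grad phi u) (psub w u))).
  { apply (is_derive_ext (fun t => phi (along u (psub w u) t)));
      [intros t; now rewrite comb_along|].
    exact (is_derive_along S phi u _ HS Hs Su). }
  assert (Hdot : dot (grad phi u) (psub w u) <= phi w - phi u).
  { pose proof (is_derive_le_chord _ _ Hd) as Hle. cbv beta in Hle.
    rewrite comb_0, comb_1 in Hle. apply Hle.
    intros t Ht. apply Hconv; auto. }
  unfold tilt, dot, psub in *; simpl in *. lra.
Qed.

(** * The Monge-Ampere equation *)

Lemma sumR_pos (m : nat) (f : nat -> R) :
  (1 <= m)%nat -> (forall i, (i < m)%nat -> 0 < f i) -> 0 < sumR m f.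
Proof.
  induction m as [|m IH]; intros Hm Hf; [lia|]. simpl.
  assert (0 < f m) by (apply Hf; lia).
  destruct m as [|m]; [simpl; lra|].
  assert (0 < sumR (S m) f) by (apply IH; [lia| intros; apply Hf; lia]). lra.
Qed.

Lemma enorm_psub_pos (w q : pt) : w <> q -> 0 < enorm (psub w q).
Proof.
  intros Hwq. unfold enorm, psub; simpl. apply sqrt_lt_R0.
  pose proof (pow2_ge_0 (fst w - fst q)). pose proof (pow2_ge_0 (snd w - snd q)).
  destruct (Req_dec (fst w) (fst q)) as [E1|E1].
  - destruct (Req_dec (snd w) (snd q)) as [E2|E2].
    + destruct w, q; simpl in *; subst; congruence.
    + assert (0 < (snd w - snd q) ^ 2) by (apply pow2_gt_0; lra). lra.
  - assert (0 < (fst w - fst q) ^ 2) by (apply pow2_gt_0; lra). lra.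
Qed.

Lemma Vpot_pos (A : R) (n : nat) (p : nat -> pt) (w : pt) :
  0 <= A -> (1 <= n)%nat -> (forall i, (i < n)%nat -> w <> p i) -> 0 < Vpot A n p w.
Proof.
  intros HA Hn Hw. unfold Vpot.
  assert (0 < sumR n (fun i => 1 / (2 * enorm (psub w (p i))))); [|lra].
  apply sumR_pos; [exact Hn|]. intros i Hi.
  pose proof (enorm_psub_pos w (p i) (Hw i Hi)).
  apply Rdiv_lt_0_compat; lra.
Qed.

Section MongeAmpere.

Variables (n : nat) (p : nat -> pt) (A : R) (phi : pt -> R).
Hypothesis Hn : (3 <= n)%nat.
Hypothesis Hp : ccw_convex_polygon n p.
Hypothesis HA : 0 <= A.
Hypothesis Hcont : cont_within_on (poly_cl n p) phi.
Hypothesis Hconv : convex_on (poly_cl n p) phi.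
Hypothesis Hs : smooth_on (poly_int n p) phi.
Hypothesis Hdet : forall u, poly_int n p u -> hess_det phi u = Vpot A n p u.
Hypothesis Haff : forall i, (i < n)%nat -> affine_on_segment phi (p i) (vert p n (S i)).

Lemma interior_grad_not_vertex_subgrad (u : pt) (i : nat) :
  poly_int n p u -> (i < n)%nat -> ~ subgrad (poly_cl n p) phi (p i) (grad phi u).
Proof.
  intros Hu Hi Hsub.
  set (y := grad phi u) in *. set (q := p i) in *.
  assert (Kq : poly_cl n p q) by exact (poly_cl_vert n p Hp i Hi).
  assert (Hq_min := proj1 (subgrad_iff_tilt_min _ _ _ _) Hsub).
  assert (Hu_min : forall w, poly_cl n p w -> tilt phi y u <= tilt phi y w).
  { apply (tilt_min_of_grad (poly_int n p)); auto using poly_int_open, poly_cl_of_int. }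
  assert (Hseg : forall s, 0 <= s <= 1 -> forall w, poly_cl n p w ->
                   tilt phi y (comb s u q) <= tilt phi y w).
  { intros s Hs01 w Kw.
    pose proof (convex_on_tilt _ _ y Hconv u q s (poly_cl_of_int n p u Hu) Kq Hs01).
    pose proof (Rmult_le_compat_l (1 - s) _ _ ltac:(lra) (Hu_min w Kw)).
    pose proof (Rmult_le_compat_l s _ _ ltac:(lra) (Hq_min w Kw)). lra. }
  set (w := comb (1 / 2) u q).
  assert (Hw : poly_int n p w) by (apply poly_int_comb; auto; lra).
  assert (Hconst : locally 0 (fun t => grad phi (along w (psub q u) t) = y)).
  { exists (mkposreal (1 / 2) ltac:(lra)). intros t Ht. change (Rabs (t - 0) < 1 / 2) in Ht.
    rewrite Rminus_0_r in Ht. apply Rabs_def2 in Ht.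
    unfold w. rewrite along_comb.
    apply (grad_eq_of_min_on_open (poly_int n p)); auto using poly_int_open.
    - apply poly_int_comb; auto; lra.
    - intros v Hv. apply Hseg; [lra| exact (poly_cl_of_int n p v Hv)]. }
  assert (Hd : psub q u <> (0, 0)).
  { intros E. apply (poly_int_neq_vert n p u i Hu Hi). fold q.
    destruct u, q; unfold psub in E; simpl in E. injection E as E1 E2. f_equal; lra. }
  pose proof (hess_det_eq_0_of_grad_const _ phi w _ y (poly_int_open n p) Hs Hw Hd Hconst) as H0.
  rewrite Hdet in H0 by exact Hw.
  assert (0 < Vpot A n p w); [|lra].
  apply Vpot_pos; [exact HA| lia|]. intros j Hj. exact (poly_int_neq_vert n p w j Hw Hj).
Qed.

Lemma grad_of_no_vertex_subgrad (y : pt) :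
  ~ (exists i, (i < n)%nat /\ subgrad (poly_cl n p) phi (p i) y) ->
  exists u, poly_int n p u /\ grad phi u = y.
Proof.
  intros Hno.
  destruct (poly_cl_bounded n p Hn Hp) as [a [b [c [d Hbox]]]].
  destruct (closed_bounded_attains_min (poly_cl n p) (tilt phi y) a b c d) as [v [Kv Hv]].
  { apply poly_cl_closed. }
  { exact Hbox. }
  { exists (p 0%nat). apply poly_cl_vert; auto; lia. }
  { apply cont_within_on_tilt, Hcont. }
  destruct (classic (poly_int n p v)) as [Iv|Iv].
  - exists v. split; [exact Iv|].
    apply (grad_eq_of_min_on_open (poly_int n p)); auto using poly_int_open.
    intros w Hw. exact (Hv w (poly_cl_of_int n p w Hw)).
  - exfalso. apply not_all_ex_not in Iv as [i Hi]. apply imply_to_and in Hi as [Hi Hx].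
    destruct (poly_cl_boundary_on_edge n p Hn Hp i v Hi Kv Hx) as [t [Ht ->]].
    assert (Hlin : tilt phi y (comb t (p i) (p (nxt n i)))
                   = (1 - t) * tilt phi y (p i) + t * tilt phi y (p (nxt n i)))
      by exact (affine_on_segment_tilt phi _ _ y t (Haff i Hi) Ht).
    apply Hno.
    destruct (convex_comb_le_endpoint (tilt phi y (p i)) (tilt phi y (p (nxt n i)))
                (tilt phi y (comb t (p i) (p (nxt n i)))) t Ht ltac:(rewrite Hlin; lra))
      as [Hle|Hle].
    + exists i. split; [exact Hi|]. apply subgrad_iff_tilt_min. intros w Kw.
      specialize (Hv w Kw). lra.
    + exists (nxt n i). split; [apply nxt_lt; exact Hi|]. apply subgrad_iff_tilt_min. intros w Kw.
      specialize (Hv w Kw). lra.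
Qed.

End MongeAmpere.

Theorem mainTheorem7 (n : nat) (p : nat -> pt) (A : R) (b : nat -> R)
  (phi : pt -> R) :
  (3 <= n)%nat ->
  ccw_convex_polygon n p ->
  0 <= A ->
  cont_within_on (poly_cl n p) phi ->
  convex_on (poly_cl n p) phi ->
  smooth_on (poly_int n p) phi ->
  (forall u, poly_int n p u -> hess_det phi u = Vpot A n p u) ->
  (forall i, (i < n)%nat -> phi (p i) = b i) ->
  (forall i, (i < n)%nat -> affine_on_segment phi (p i) (vert p n (S i))) ->
  forall y : pt,
    (exists u, poly_int n p u /\ grad phi u = y) <->
    ~ (exists i, (i < n)%nat /\ subgrad (poly_cl n p) phi (p i) y).
Proof.
  intros Hn Hp HA Hcont Hconv Hs Hdet _ Haff y. split.
  - intros [u [Hu <-]] [i [Hi Hsub]].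
    exact (interior_grad_not_vertex_subgrad n p A phi Hn Hp HA Hconv Hs Hdet u i Hu Hi Hsub).
  - exact (grad_of_no_vertex_subgrad n p phi Hn Hp Hcont Hs Haff y).
Qed.
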